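(* The cycle-free fragments of G3s + $(\Box\mathrm{Cut})$, G3s + (Cut) and G3s are identical: a sequent has a prehistoric-cycle-free proof in one of these three systems if and only if it has one in each of the others.
   Context: S4 formulas: $A ::= \bot \mid P \mid A_0\to A_1 \mid \Box A$ ($P$ atomic). Sequents $\Gamma\supset\Delta$ use finite multisets; $\Box\Gamma:=\{\Box C\mid C\in\Gamma\}$. G3s rules: (Ax) $P,\Gamma\supset\Delta,P$ ($P$ atomic); $(\bot\supset)$ $\bot,\Gamma\supset\Delta$; $(\to\supset)$ from $\Gamma\supset\Delta,A$ and $B,\Gamma\supset\Delta$ infer $A\to B,\Gamma\supset\Delta$; $(\supset\to)$ from $A,\Gamma\supset\Delta,B$ infer $\Gamma\supset\Delta,A\to B$; $(\Box\supset)$ from $A,\Box A,\Gamma\supset\Delta$ infer $\Box A,\Gamma\supset\Delta$; $(\supset\Box)$ from $\Box\Gamma\supset A$ infer $\Gamma',\Box\Gamma\supset\Delta',\Box A$. (Cut): from $\Gamma\supset\Delta,A$ and $A,\Gamma\supset\Delta$ infer $\Gamma\supset\Delta$. $(\Box\mathrm{Cut})$: from $\Gamma\supset\Delta,\Box A,\Box B$ and $\Gamma\supset\Delta,\Box(A\to B),\Box B$ infer $\Gamma\supset\Delta,\Box B$. The system G3s + $(\Box\mathrm{Cut})$ is G3s with the rule $(\Box\mathrm{Cut})$ added; G3s + (Cut) is G3s with (Cut) added. In a rule instance, formulas of $\Gamma,\Delta,\Box\Gamma$ repeated in premise(s) and conclusion are side formulas; $\Gamma',\Delta'$ (and $\Gamma,\Delta$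 in axioms) are weakening formulas; the distinguished new formula of the conclusion is principal and the distinguished formulas of the premises are active. Correspondence of symbol occurrences: a symbol occurrence in a side formula of a premise directly corresponds to the same occurrence in the conclusion; an active formula of a premise directly corresponds to the topmost occurrence of that formula as a subformula of the principal formula, with its symbol occurrences corresponding accordingly; in (Cut) the two active occurrences of the cut formula (and their symbols) correspond; in $(\Box\mathrm{Cut})$ the outermost $\Box$'s of $\Box A$, $\Box(A\to B)$ and all occurrences of $\Box B$ correspond, the two occurrences of the subformula $A$ correspond symbolwise, and the occurrences of the subformula $B$ correspond symbolwise. Correspondence is the reflexive, symmetric, transitive closure; a family is an equivalence class of $\Box$-occurrences. $i\prec j$ (prehistoric relation) if some $(\supset\Box)$ rule whose principal $\Box A$ has its outermost $\Box$ in family $j$ has a premise containing a $\Box$-occurrence of family $i$. A prehistoric cycle is $i_0\prec\cdots\prec i_{n-1}\prec i_0$ ($n\ge1$); a proof is prehistoric-cycle-free if it has none. The cycle-free fragment of a system is the set of sequents having a prehistoric-cycle-free proof in that system. (For cut-free G3s proofs, restricting $\prec$ to families introduced by $(\supset\Box)$ rules yields the same cycles, since other families have no prehistoric predecessors.) *)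

From Stdlib Require Import List Permutation Relations.
Import ListNotations.

Inductive form : Type :=
| Bot : form
| Var : nat -> form
| Imp : form -> form -> form
| Box : form -> form.

(** Formulas in which every Box occurrence carries a label (the name of
    its family).  Correspondence of Box-occurrences in a
    rule instance is enforced by requiring corresponding occurrences to
    carry the same label. *)
Inductive aform : Type :=
| ABot : aform
| AVar : nat -> aform
| AImp : aform -> aform -> aform
| ABox : nat -> aform -> aform.

Fixpoint erase (a : aform) : form :=
  match a with
  | ABot => Bot
  | AVar p => Var p
  | AImp a b => Imp (erase a) (erase b)
  | ABox _ a => Box (erase a)
  end.

Fixpoint labels (a : aform) : list nat :=
  match a with
  | ABot | AVar _ => []
  | AImp a b => labels a ++ labels b
  | ABox l a => l :: labels a
  end.

Definition labels_list (G : list aform) : list nat := flat_map labels G.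

Definition isABox (a : aform) : Prop := exists l c, a = ABox l c.

Inductive sys : Type := G3s | G3s_Cut | G3s_BoxCut.

(** Sequents are
    multisets, represented by lists up to permutation (constructor
    [d_perm], which is the identity on the multiset sequent and on all
    symbol occurrences). *)
Inductive deriv (s : sys) : list aform -> list aform -> Type :=
| d_perm : forall G D G' D',
    deriv s G D -> Permutation G G' -> Permutation D D' -> deriv s G' D'
| d_ax : forall (p : nat) G D,
    deriv s (AVar p :: G) (AVar p :: D)
| d_bot : forall G D,
    deriv s (ABot :: G) D
| d_impL : forall A B G D,
    deriv s G (A :: D) -> deriv s (B :: G) D -> deriv s (AImp A B :: G) D
| d_impR : forall A B G D,
    deriv s (A :: G) (B :: D) -> deriv s G (AImp A B :: D)
| d_boxL : forall l A G D,
    deriv s (A :: ABox l A :: G) D -> deriv s (ABox l A :: G) D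
| d_boxR : forall (j : nat) (A : aform) (G0 Gw Dw : list aform),
    Forall isABox G0 ->
    deriv s G0 [A] -> deriv s (Gw ++ G0) (ABox j A :: Dw)
| d_cut : s = G3s_Cut -> forall A G D,
    deriv s G (A :: D) -> deriv s (A :: G) D -> deriv s G D
| d_boxcut : s = G3s_BoxCut -> forall l A B G D,
    deriv s G (ABox l A :: ABox l B :: D) ->
    deriv s G (ABox l (AImp A B) :: ABox l B :: D) ->
    deriv s G (ABox l B :: D).

Fixpoint prehist {s G D} (d : deriv s G D) : nat -> nat -> Prop :=
  match d with
  | d_perm _ _ _ _ _ d1 _ _ => prehist d1
  | d_ax _ _ _ _ => fun _ _ => False
  | d_bot _ _ _ => fun _ _ => False
  | d_impL _ _ _ _ _ d1 d2 => fun i j => prehist d1 i j \/ prehist d2 i j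
  | d_impR _ _ _ _ _ d1 => prehist d1
  | d_boxL _ _ _ _ _ d1 => prehist d1
  | d_boxR _ j0 A G0 _ _ _ d1 => fun i j =>
      (j = j0 /\ In i (labels_list G0 ++ labels A)) \/ prehist d1 i j
  | d_cut _ _ _ _ _ d1 d2 => fun i j => prehist d1 i j \/ prehist d2 i j
  | d_boxcut _ _ _ _ _ _ _ d1 d2 => fun i j => prehist d1 i j \/ prehist d2 i j
  end.

Definition cycle_free {s G D} (d : deriv s G D) : Prop :=
  forall i, ~ clos_trans nat (prehist d) i i.

Definition cf_provable (s : sys) (Gamma Delta : list form) : Prop :=
  exists (G D : list aform) (d : deriv s G D),
    map erase G = Gamma /\ map erase D = Delta /\ cycle_free d.

From Stdlib Require Import List Permutation Relations Wf_nat Lia.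
Import ListNotations.

(* The proof abstracts from the particular prehistoric relation.  Fix any
   relation R on labels and consider the cut-free, set-based calculus
   [rproof R] ("R-proofs"): G3s read with sets instead of multisets, in
   which every (⊃Box) step introducing a box labelled j must have all labels
   of its premise R-below j.  For transitive R we show:
   - (⊃→) and (→⊃) are height-preserving invertible for R-proofs;
   - (Cut) is admissible, by induction on the cut formula and on the left
     premise; transitivity of R is used exactly when a (⊃Box) step is
     pushed through a cut on a box formula;
   - (BoxCut) is admissible, using invertibility of (⊃→) and (Cut).
   Hence any proof d in any of the three systems yields an R-proof for
   R := clos_trans (prehist d), and every R-proof is read back as a proof in
   any of the three systems whose prehistoric relation is contained in R.
   A prehistoric cycle of the new proof is then one of d. *)

Definition aform_eq_dec : forall a b : aform, {a = b} + {a <> b}.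
Proof. decide equality; apply PeanoNat.Nat.eq_dec. Defined.

Ltac incl_tac :=
  let x := fresh "x" in let Hx := fresh "Hx" in
  intros x Hx;
  repeat match goal with
         | H : ?T |- _ =>
             lazymatch T with
             | incl _ _ => fail
             | In _ _ => fail
             | _ => clear H
             end
         end;
  unfold incl in *; simpl in *; repeat rewrite in_app_iff in *;
  firstorder (subst; auto).

Lemma labels_list_incl G G' : incl G G' -> incl (labels_list G) (labels_list G').
Proof.
  intros HG i Hi. unfold labels_list in *.
  apply in_flat_map in Hi as [x [Hx Hi]]. apply in_flat_map. eauto.
Qed.

Lemma labels_list_app G G' : labels_list (G ++ G') = labels_list G ++ labels_list G'.
Proof. apply flat_map_app. Qed.

Lemma box_context_no_imp H A B : Forall isABox H -> ~ In (AImp A B) H.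
Proof.
  intros HF Hin. rewrite Forall_forall in HF.
  destruct (HF _ Hin) as [? [? E]]; discriminate.
Qed.

Lemma incl_cons_drop (a : aform) H G : incl H (a :: G) -> ~ In a H -> incl H G.
Proof. intros HG Ha x Hx. destruct (HG _ Hx) as [->|]; tauto. Qed.

Lemma incl_remove (a : aform) H : incl (remove aform_eq_dec a H) H.
Proof. intros x Hx. apply in_remove in Hx. tauto. Qed.

Lemma perm_of_in (x : aform) L : In x L -> exists L', Permutation L (x :: L').
Proof.
  intros H. apply in_split in H as [l1 [l2 ->]].
  exists (l1 ++ l2). apply Permutation_sym, Permutation_middle.
Qed.

Lemma split_context (H G : list aform) :
  incl H G -> exists G0 Gw, Permutation G (Gw ++ G0) /\ incl H G0 /\ incl G0 H.
Proof.
  intros HG. set (f := fun x => if in_dec aform_eq_dec x H then true else false).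
  exists (filter f G), (filter (fun x => negb (f x)) G). repeat split.
  - clear HG. induction G as [|a G IH]; simpl; auto.
    destruct (f a); simpl; auto.
    eapply Permutation_trans; [apply perm_skip, IH|]. apply Permutation_middle.
  - intros x Hx. apply filter_In. split; auto.
    unfold f. destruct (in_dec aform_eq_dec x H); tauto.
  - intros x Hx. apply filter_In in Hx as [_ Hx].
    unfold f in Hx. destruct (in_dec aform_eq_dec x H); [auto | discriminate].
Qed.

Lemma deriv_initial s G D : (exists p, In (AVar p) G /\ In (AVar p) D) \/ In ABot G ->
  exists d : deriv s G D, forall i j, ~ prehist d i j.
Proof.
  intros [[p [HpG HpD]] | HbotG].
  - destruct (perm_of_in _ _ HpG) as [G1 PG]. destruct (perm_of_in _ _ HpD) as [D1 PD].
    exists (d_perm s _ _ _ _ (d_ax s p G1 D1) (Permutation_sym PG) (Permutation_sym PD)).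
    simpl; tauto.
  - destruct (perm_of_in _ _ HbotG) as [G1 PG].
    exists (d_perm s _ _ _ _ (d_bot s G1 D) (Permutation_sym PG) (Permutation_refl _)).
    simpl; tauto.
Qed.

Lemma clos_trans_least (P Q : nat -> nat -> Prop) :
  (forall a b c, Q a b -> Q b c -> Q a c) -> (forall a b, P a b -> Q a b) ->
  forall a b, clos_trans nat P a b -> Q a b.
Proof. intros Htr HPQ a b Hab. induction Hab; eauto. Qed.

Fixpoint fsize (a : aform) : nat :=
  match a with
  | ABot | AVar _ => 1
  | AImp a b => S (fsize a + fsize b)
  | ABox _ a => S (fsize a)
  end.

Section RespectingProofs.

Variable R : nat -> nat -> Prop.

(* [rproof n G D]: the sequent G ⊃ D, with antecedent and succedent read as
   sets, has a cut-free proof of height at most n whose (⊃Box) steps respect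
   R.  Principal formulas are only required to be members of the conclusion
   and remain available in the premises; the box context H of (⊃Box) may be
   any subset of boxed formulas of G. *)
Inductive rproof : nat -> list aform -> list aform -> Prop :=
| rp_ax n p G D : In (AVar p) G -> In (AVar p) D -> rproof n G D
| rp_bot n G D : In ABot G -> rproof n G D
| rp_impL n A B G D : In (AImp A B) G ->
    rproof n G (A :: D) -> rproof n (B :: G) D -> rproof (S n) G D
| rp_impR n A B G D : In (AImp A B) D ->
    rproof n (A :: G) (B :: D) -> rproof (S n) G D
| rp_boxL n l A G D : In (ABox l A) G -> rproof n (A :: G) D -> rproof (S n) G D
| rp_boxR n j A H G D : In (ABox j A) D -> Forall isABox H -> incl H G ->
    (forall i, In i (labels_list H ++ labels A) -> R i j) ->
    rproof n H [A] -> rproof (S n) G D.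

Definition rprovable (G D : list aform) : Prop := exists n, rproof n G D.

Lemma rproof_weaken n G D :
  rproof n G D -> forall G' D', incl G G' -> incl D D' -> rproof n G' D'.
Proof.
  induction 1; intros G' D' HG HD.
  - eapply rp_ax; eauto.
  - eapply rp_bot; eauto.
  - eapply rp_impL; [eauto | apply IHrproof1 | apply IHrproof2]; incl_tac.
  - eapply rp_impR; [eauto | apply IHrproof]; incl_tac.
  - eapply rp_boxL; [eauto | apply IHrproof]; incl_tac.
  - eapply rp_boxR; eauto. incl_tac.
Qed.

Lemma rproof_succ n G D : rproof n G D -> rproof (S n) G D.
Proof.
  induction 1; [eapply rp_ax | eapply rp_bot | eapply rp_impL | eapply rp_impR
    | eapply rp_boxL | eapply rp_boxR]; eauto.
Qed.

Lemma rproof_le n m G D : n <= m -> rproof n G D -> rproof m G D.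
Proof. induction 1; auto using rproof_succ. Qed.

Lemma rprovable_weaken G D G' D' :
  rprovable G D -> incl G G' -> incl D D' -> rprovable G' D'.
Proof. intros [n H] HG HD. exists n. eapply rproof_weaken; eauto. Qed.

Lemma rprovable_ax p G D : In (AVar p) G -> In (AVar p) D -> rprovable G D.
Proof. exists 0. eapply rp_ax; eauto. Qed.

Lemma rprovable_bot G D : In ABot G -> rprovable G D.
Proof. exists 0. eapply rp_bot; eauto. Qed.

Lemma rprovable_impL A B G D : In (AImp A B) G ->
  rprovable G (A :: D) -> rprovable (B :: G) D -> rprovable G D.
Proof.
  intros H [n1 H1] [n2 H2]. exists (S (max n1 n2)).
  eapply rp_impL; [exact H | apply (rproof_le n1) | apply (rproof_le n2)];
    auto; lia.
Qed.

Lemma rprovable_impR A B G D : In (AImp A B) D ->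
  rprovable (A :: G) (B :: D) -> rprovable G D.
Proof. intros H [n H1]. exists (S n). eapply rp_impR; eauto. Qed.

Lemma rprovable_boxL l A G D : In (ABox l A) G -> rprovable (A :: G) D -> rprovable G D.
Proof. intros H [n H1]. exists (S n). eapply rp_boxL; eauto. Qed.

Lemma rprovable_boxR j A H G D : In (ABox j A) D -> Forall isABox H -> incl H G ->
  (forall i, In i (labels_list H ++ labels A) -> R i j) ->
  rprovable H [A] -> rprovable G D.
Proof. intros ? ? ? ? [n H1]. exists (S n). eapply rp_boxR; eauto. Qed.

Lemma rproof_impL_inv n G D : rproof n G D ->
  forall X Y G' D', incl G (AImp X Y :: G') -> incl D D' ->
  rproof n G' (X :: D') /\ rproof n (Y :: G') D'.
Proof.
  induction 1 as [| | | | | n j A H G D HjA HboxH HHG HHl HHA _];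
    intros X Y G' D' HG HD.
  - destruct (HG _ H) as [E|Hi]; [discriminate|].
    split; eapply rp_ax; simpl; eauto.
  - destruct (HG _ H) as [E|Hi]; [discriminate|].
    split; eapply rp_bot; simpl; eauto.
  - destruct (IHrproof1 X Y G' (A :: D')) as [I1 I2]; [incl_tac | incl_tac |].
    destruct (IHrproof2 X Y (B :: G') D') as [J1 J2]; [incl_tac | incl_tac |].
    destruct (HG _ H) as [E|Hi].
    + injection E as -> ->.
      split; apply rproof_succ; eapply rproof_weaken; [exact I1 | | | exact J2 | |];
        incl_tac.
    + split.
      * eapply rp_impL; [exact Hi | eapply rproof_weaken; [exact I1 | |] | exact J1];
          incl_tac.
      * eapply rp_impL; [simpl; eauto | exact I2 | eapply rproof_weaken; [exact J2 | |]];
          incl_tac.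
  - destruct (IHrproof X Y (A :: G') (B :: D')) as [I1 I2]; [incl_tac | incl_tac |].
    split; eapply rp_impR; [simpl; eauto | | simpl; eauto |];
      eapply rproof_weaken; [exact I1 | | | exact I2 | |]; incl_tac.
  - destruct (IHrproof X Y (A :: G') D') as [I1 I2]; [incl_tac | auto |].
    destruct (HG _ H) as [E|Hi]; [discriminate|].
    split; eapply rp_boxL;
      [exact Hi | exact I1 | simpl; eauto | eapply rproof_weaken; [exact I2 | |]];
      incl_tac.
  - assert (HH : incl H G').
    { apply (incl_cons_drop (AImp X Y)); [exact (incl_tran HHG HG) |].
      exact (box_context_no_imp _ _ _ HboxH). }
    split; (eapply rp_boxR; [| exact HboxH | | exact HHl | exact HHA]);
      [right; apply HD, HjA | exact HH | apply HD, HjA | incl_tac].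
Qed.

Lemma rproof_impR_inv n G D : rproof n G D ->
  forall X Y G' D', incl G G' -> incl D (AImp X Y :: D') ->
  rproof n (X :: G') (Y :: D').
Proof.
  induction 1; intros X Y G' D' HG HD.
  - destruct (HD _ H0) as [E|Hi]; [discriminate|].
    eapply rp_ax; simpl; eauto.
  - eapply rp_bot; simpl; eauto.
  - eapply rp_impL; [simpl; eauto | |]; eapply rproof_weaken;
      [apply (IHrproof1 X Y G' (A :: D')) | | | apply (IHrproof2 X Y (B :: G') D') | |];
      incl_tac.
  - assert (I1 := IHrproof X Y (A :: G') (B :: D') ltac:(incl_tac) ltac:(incl_tac)).
    destruct (HD _ H) as [E|Hi].
    + injection E as -> ->. apply rproof_succ. eapply rproof_weaken; eauto; incl_tac.
    + eapply rp_impR; [simpl; eauto|]. eapply rproof_weaken; eauto; incl_tac.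
  - assert (I1 := IHrproof X Y (A :: G') D' ltac:(incl_tac) HD).
    eapply rp_boxL; [simpl; eauto|]. eapply rproof_weaken; eauto; incl_tac.
  - destruct (HD _ H0) as [E|Hi]; [discriminate|].
    eapply rp_boxR; [simpl; eauto | eauto | | eauto | eauto]. incl_tac.
Qed.

(* From here on R is transitive, as is the transitive closure of a
   prehistoric relation. *)
Hypothesis R_trans : forall a b c, R a b -> R b c -> R a c.

Definition cut_admissible_for (A : aform) : Prop :=
  forall G D, rprovable G (A :: D) -> rprovable (A :: G) D -> rprovable G D.

(* Principal cut on an implication, reduced by (→⊃)-inversion to cuts on
   its components. *)
Lemma cut_imp_principal X Y G D : cut_admissible_for X -> cut_admissible_for Y ->
  rprovable (X :: G) (Y :: D) -> rprovable (AImp X Y :: G) D -> rprovable G D.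
Proof.
  intros cutX cutY HXY [n Himp].
  destruct (rproof_impL_inv _ _ _ Himp X Y G D) as [HX HY]; [incl_tac | incl_tac |].
  apply (cutY G D); [| exists n; exact HY].
  apply (cutX G (Y :: D)); [| exact HXY].
  exists n. eapply rproof_weaken; [exact HX | |]; incl_tac.
Qed.

(* Replacing ABox j X by a box context K, R-below j, in the box context H of
   a (⊃Box) step labelled j0 keeps the step R-respecting: j itself occurs in
   H, hence is R-below j0. *)
Lemma substitute_box_context j X j0 K H A : In (ABox j X) H ->
  (forall i, In i (labels_list K ++ labels X) -> R i j) ->
  (forall i, In i (labels_list H ++ labels A) -> R i j0) ->
  forall i, In i (labels_list (K ++ remove aform_eq_dec (ABox j X) H) ++ labels A) -> R i j0.
Proof.
  intros Hin HKl HHl i Hi.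
  rewrite labels_list_app, <- app_assoc in Hi. apply in_app_or in Hi as [Hi|Hi].
  - apply R_trans with j; [apply HKl, in_or_app; left; exact Hi |].
    apply HHl, in_or_app; left.
    apply (labels_list_incl [ABox j X] H); [incl_tac | left; reflexivity].
  - apply HHl. rewrite in_app_iff in *. destruct Hi as [Hi|Hi]; [left | right; exact Hi].
    exact (labels_list_incl _ _ (incl_remove _ _) _ Hi).
Qed.

(* Cut on a box formula ABox j X whose left premise ends with (⊃Box) from
   K ⊃ X, by induction on the right premise.  Uses of ABox j X by (Box⊃)
   become cuts on X; in the box context of a (⊃Box) step, ABox j X is
   replaced by K. *)
Lemma cut_box_principal j X : cut_admissible_for X ->
  forall n G2 D2, rproof n G2 D2 ->
  forall K G D, incl G2 (ABox j X :: G) -> incl D2 D ->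
  Forall isABox K -> incl K G -> (forall i, In i (labels_list K ++ labels X) -> R i j) ->
  rprovable K [X] -> rprovable G D.
Proof.
  intros cutX.
  induction 1 as [| | | | | n j0 A H G D HjA HboxH HHG HHl HHA IH];
    intros K G' D' HG HD HK HKG HKl HKX.
  - destruct (HG _ H) as [E|Hi]; [discriminate|]. eapply rprovable_ax; eauto.
  - destruct (HG _ H) as [E|Hi]; [discriminate|]. eapply rprovable_bot; eauto.
  - destruct (HG _ H) as [E|Hi]; [discriminate|].
    eapply rprovable_impL; [exact Hi | eapply IHrproof1 | eapply IHrproof2];
      eauto; incl_tac.
  - eapply rprovable_impR; [eauto | eapply IHrproof]; eauto; incl_tac.
  - assert (I1 : rprovable (A :: G') D') by (eapply IHrproof; eauto; incl_tac).
    destruct (HG _ H) as [E|Hi].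
    + injection E as <- <-. apply (cutX G' D'); [| exact I1].
      eapply rprovable_weaken; [exact HKX | |]; incl_tac.
    + eapply rprovable_boxL; eauto.
  - destruct (in_dec aform_eq_dec (ABox j X) H) as [Hin|Hnin].
    + set (H' := K ++ remove aform_eq_dec (ABox j X) H).
      assert (Hrest : incl (remove aform_eq_dec (ABox j X) H) G').
      { apply (incl_cons_drop (ABox j X)); [| apply remove_In].
        exact (incl_tran (incl_remove _ _) (incl_tran HHG HG)). }
      apply (rprovable_boxR j0 A H'); [auto | | | | ].
      * apply Forall_app; split; [exact HK | exact (incl_Forall (incl_remove _ _) HboxH)].
      * apply incl_app; [exact HKG | exact Hrest].
      * apply (substitute_box_context j X); assumption.
      * apply (IH K); [| apply incl_refl | exact HK | apply incl_appl, incl_refl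
          | exact HKl | exact HKX].
        intros x Hx. destruct (aform_eq_dec x (ABox j X)) as [->|Hne]; [left; auto|].
        right. apply in_or_app; right. apply in_in_remove; auto.
    + apply (rprovable_boxR j0 A H); [auto | exact HboxH | | exact HHl | exists n; exact HHA].
      apply (incl_cons_drop (ABox j X)); [exact (incl_tran HHG HG) | exact Hnin].
Qed.

Lemma cut_left_induction A : (forall B, fsize B < fsize A -> cut_admissible_for B) ->
  forall n G1 D1, rproof n G1 D1 -> forall G D, incl G1 G -> incl D1 (A :: D) ->
  rprovable (A :: G) D -> rprovable G D.
Proof.
  intros IHsize.
  induction 1 as [| | | | | n j C H G D HjC HboxH HHG HHl HHC _];
    intros G' D' HG HD Hright.
  - destruct (HD _ H0) as [->|Hi].
    + eapply rprovable_weaken; [exact Hright | | apply incl_refl]. incl_tac.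
    + eapply rprovable_ax; eauto.
  - eapply rprovable_bot; eauto.
  - eapply rprovable_impL; [eauto | apply IHrproof1 | apply IHrproof2];
      try (eapply rprovable_weaken; [exact Hright | |]); incl_tac.
  - assert (I1 : rprovable (A0 :: G') (B :: D'))
      by (apply IHrproof; [| | eapply rprovable_weaken; [exact Hright | |]]; incl_tac).
    destruct (HD _ H) as [->|Hi].
    + apply (cut_imp_principal A0 B); auto; apply IHsize; simpl; lia.
    + eapply rprovable_impR; eauto.
  - eapply rprovable_boxL; [eauto | apply IHrproof];
      try (eapply rprovable_weaken; [exact Hright | |]); incl_tac.
  - destruct (HD _ HjC) as [->|Hi].
    + destruct Hright as [m Hright].
      apply (cut_box_principal j C (IHsize C ltac:(simpl; lia)) _ _ _ Hright H);
        [apply incl_refl | apply incl_refl | exact HboxH | incl_tac | exact HHl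
        | exists n; exact HHC].
    + eapply rprovable_boxR; [exact Hi | exact HboxH | | exact HHl | exists n; exact HHC].
      incl_tac.
Qed.

Lemma cut_admissible A : cut_admissible_for A.
Proof.
  induction A as [A IH] using (well_founded_induction (well_founded_ltof _ fsize)).
  intros G D [n Hleft] Hright.
  eapply cut_left_induction;
    [exact IH | exact Hleft | apply incl_refl | apply incl_refl | exact Hright].
Qed.

(* (BoxCut) whose first premise ends with (⊃Box) introducing ABox l A from
   K ⊃ A, by induction on the second premise.  Where ABox l (A → B) is
   introduced from H ⊃ A → B, invert to A, H ⊃ B, cut A against K ⊃ A and
   introduce ABox l B from K, H ⊃ B: all its labels are R-below l. *)
Lemma boxcut_principal l A B K : Forall isABox K ->
  (forall i, In i (labels_list K ++ labels A) -> R i l) -> rprovable K [A] ->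
  forall n G2 D2, rproof n G2 D2 ->
  forall G D, incl G2 G -> incl D2 (ABox l (AImp A B) :: ABox l B :: D) -> incl K G ->
  rprovable G (ABox l B :: D).
Proof.
  intros HK HKl HKA.
  induction 1 as [| | | | | n j C H G D HjC HboxH HHG HHl HHC _];
    intros G' D' HG HD HKG.
  - destruct (HD _ H0) as [E|[E|Hi]]; try discriminate.
    eapply rprovable_ax; simpl; eauto.
  - eapply rprovable_bot; eauto.
  - eapply rprovable_impL; [eauto | |].
    + eapply rprovable_weaken; [apply (IHrproof1 G' (A0 :: D')) | |]; incl_tac.
    + apply IHrproof2; incl_tac.
  - destruct (HD _ H) as [E|[E|Hi]]; try discriminate.
    eapply rprovable_impR; [simpl; eauto |].
    eapply rprovable_weaken; [apply (IHrproof (A0 :: G') (B0 :: D')) | |]; incl_tac.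
  - eapply rprovable_boxL; [eauto | apply IHrproof]; incl_tac.
  - destruct (HD _ HjC) as [E|Hi].
    + injection E as <- <-.
      assert (HinvH : rproof n (A :: H) [B])
        by (eapply rproof_impR_inv; [exact HHC | apply incl_refl | incl_tac]).
      assert (HKH : rprovable (K ++ H) [B]).
      { apply (cut_admissible A (K ++ H) [B]).
        - eapply rprovable_weaken; [exact HKA | |]; incl_tac.
        - exists n. eapply rproof_weaken; [exact HinvH | |]; incl_tac. }
      apply (rprovable_boxR l B (K ++ H)); [left; reflexivity | | | | exact HKH].
      * apply Forall_app; auto.
      * apply incl_app; [exact HKG | incl_tac].
      * intros i Hi. rewrite labels_list_app in Hi. repeat rewrite in_app_iff in Hi.
        destruct Hi as [[Hi|Hi]|Hi].
        -- apply HKl, in_or_app; left; exact Hi.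
        -- apply HHl, in_or_app; left; exact Hi.
        -- apply HHl, in_or_app; right. simpl. apply in_or_app; right; exact Hi.
    + eapply rprovable_boxR; [exact Hi | exact HboxH | | exact HHl | exists n; exact HHC].
      incl_tac.
Qed.

Lemma boxcut_left_induction l A B :
  forall n G1 D1, rproof n G1 D1 -> forall G D, incl G1 G ->
  incl D1 (ABox l A :: ABox l B :: D) ->
  rprovable G (ABox l (AImp A B) :: ABox l B :: D) -> rprovable G (ABox l B :: D).
Proof.
  induction 1 as [| | | | | n j C H G D HjC HboxH HHG HHl HHC _];
    intros G' D' HG HD Hsecond.
  - destruct (HD _ H0) as [E|[E|Hi]]; try discriminate.
    eapply rprovable_ax; simpl; eauto.
  - eapply rprovable_bot; eauto.
  - eapply rprovable_impL; [eauto | |].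
    + eapply rprovable_weaken; [apply (IHrproof1 G' (A0 :: D')) | |]; try incl_tac.
      eapply rprovable_weaken; [exact Hsecond | |]; incl_tac.
    + apply IHrproof2; try incl_tac.
      eapply rprovable_weaken; [exact Hsecond | |]; incl_tac.
  - destruct (HD _ H) as [E|[E|Hi]]; try discriminate.
    eapply rprovable_impR; [simpl; eauto |].
    eapply rprovable_weaken; [apply (IHrproof (A0 :: G') (B0 :: D')) | |]; try incl_tac.
    eapply rprovable_weaken; [exact Hsecond | |]; incl_tac.
  - eapply rprovable_boxL; [eauto | apply IHrproof]; try incl_tac.
    eapply rprovable_weaken; [exact Hsecond | |]; incl_tac.
  - destruct (HD _ HjC) as [E|Hi].
    + injection E as <- <-. destruct Hsecond as [m Hsecond].
      eapply (boxcut_principal l A B H HboxH HHl (ex_intro _ n HHC));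
        [exact Hsecond | apply incl_refl | apply incl_refl | incl_tac].
    + eapply rprovable_boxR; [exact Hi | exact HboxH | | exact HHl | exists n; exact HHC].
      incl_tac.
Qed.

Lemma boxcut_admissible l A B G D :
  rprovable G (ABox l A :: ABox l B :: D) ->
  rprovable G (ABox l (AImp A B) :: ABox l B :: D) -> rprovable G (ABox l B :: D).
Proof.
  intros [n Hfirst] Hsecond.
  eapply boxcut_left_induction;
    [exact Hfirst | apply incl_refl | apply incl_refl | exact Hsecond].
Qed.

Definition prehist_within {s G D} (d : deriv s G D) : Prop :=
  forall i j, prehist d i j -> R i j.

Lemma rprovable_of_deriv s G D (d : deriv s G D) : prehist_within d -> rprovable G D.
Proof.
  unfold prehist_within. induction d; simpl; intros Hd.
  - eapply rprovable_weaken; [apply IHd, Hd | |];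
      intros x Hx; eapply Permutation_in; eauto.
  - eapply rprovable_ax; left; reflexivity.
  - eapply rprovable_bot; left; reflexivity.
  - eapply rprovable_impL; [left; reflexivity | |];
      eapply rprovable_weaken; [apply IHd1 | | | apply IHd2 | |]; auto; incl_tac.
  - eapply rprovable_impR; [left; reflexivity |].
    eapply rprovable_weaken; [apply IHd, Hd | |]; incl_tac.
  - eapply rprovable_boxL; [left; reflexivity | apply IHd, Hd].
  - eapply rprovable_boxR; [left; reflexivity | exact f | apply incl_appr, incl_refl | |
      apply IHd; auto].
    intros i Hi. apply Hd. left; auto.
  - apply (cut_admissible A); auto.
  - apply boxcut_admissible with A; auto.
Qed.

(* The principal formulas kept in the premises
   of R-proofs are removed by the height-preserving inversions. *)
Lemma deriv_of_rproof s n G D : rproof n G D ->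
  forall G' D', incl G G' -> incl D D' -> exists d : deriv s G' D', prehist_within d.
Proof.
  unfold prehist_within. revert G D.
  induction n as [n IH] using lt_wf_ind; intros G D Hp G' D' HG HD.
  inversion Hp as [n0 p G0 D0 HpG HpD | n0 G0 D0 HG0
    | n0 A B G0 D0 HAB H1 H2 | n0 A B G0 D0 HAB H1 | n0 l A G0 D0 HlA H1
    | n0 j A H G0 D0 HjA HboxH HHG HHl HHA]; subst.
  - destruct (deriv_initial s G' D') as [d Hd]; [left; eauto |].
    exists d. intros i j Hij. destruct (Hd i j Hij).
  - destruct (deriv_initial s G' D') as [d Hd]; [right; auto |].
    exists d. intros i j Hij. destruct (Hd i j Hij).
  - destruct (perm_of_in _ _ (HG _ HAB)) as [G1 PG].
    assert (HG1 : incl G' (AImp A B :: G1)) by (intros x Hx; eapply Permutation_in; eauto).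
    destruct (rproof_impL_inv _ _ _ H1 A B G1 (A :: D)) as [I1 _]; [incl_tac | incl_tac |].
    destruct (rproof_impL_inv _ _ _ H2 A B (B :: G1) D) as [_ I2]; [incl_tac | incl_tac |].
    destruct (IH n0 ltac:(lia) _ _ I1 G1 (A :: D')) as [d1 Hd1]; [incl_tac | incl_tac |].
    destruct (IH n0 ltac:(lia) _ _ I2 (B :: G1) D') as [d2 Hd2]; [incl_tac | incl_tac |].
    exists (d_perm s _ _ _ _ (d_impL s A B G1 D' d1 d2) (Permutation_sym PG)
      (Permutation_refl _)).
    simpl. intros i j [Hi|Hi]; eauto.
  - destruct (perm_of_in _ _ (HD _ HAB)) as [D1 PD].
    assert (HD1 : incl D' (AImp A B :: D1)) by (intros x Hx; eapply Permutation_in; eauto).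
    assert (I1 : rproof n0 (A :: A :: G) (B :: B :: D1))
      by (eapply rproof_impR_inv; [exact H1 | incl_tac | incl_tac]).
    destruct (IH n0 ltac:(lia) _ _ I1 (A :: G') (B :: D1)) as [d1 Hd1]; [incl_tac | incl_tac |].
    exists (d_perm s _ _ _ _ (d_impR s A B G' D1 d1) (Permutation_refl _)
      (Permutation_sym PD)).
    exact Hd1.
  - destruct (perm_of_in _ _ (HG _ HlA)) as [G1 PG].
    assert (HG1 : incl G' (ABox l A :: G1)) by (intros x Hx; eapply Permutation_in; eauto).
    destruct (IH n0 ltac:(lia) _ _ H1 (A :: ABox l A :: G1) D') as [d1 Hd1];
      [incl_tac | exact HD |].
    exists (d_perm s _ _ _ _ (d_boxL s l A G1 D' d1) (Permutation_sym PG)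
      (Permutation_refl _)).
    exact Hd1.
  - destruct (perm_of_in _ _ (HD _ HjA)) as [D1 PD].
    destruct (split_context H G' (incl_tran HHG HG)) as [G0 [Gw [PG [HG0 HG0']]]].
    assert (Hbox0 : Forall isABox G0) by exact (incl_Forall HG0' HboxH).
    destruct (IH n0 ltac:(lia) _ _ HHA G0 [A] HG0 (incl_refl _)) as [d1 Hd1].
    exists (d_perm s _ _ _ _ (d_boxR s j A G0 Gw D1 Hbox0 d1) (Permutation_sym PG)
      (Permutation_sym PD)).
    simpl. intros i j' [[-> Hi]|Hi]; [| auto].
    apply HHl. rewrite in_app_iff in *. destruct Hi as [Hi|Hi]; [left | right; exact Hi].
    exact (labels_list_incl _ _ HG0' _ Hi).
Qed.

End RespectingProofs.

(* A proof d in s1 gives an R-proof for R the transitive closure of its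
   prehistoric relation, which is read back as a proof d' in s2.  Since R is
   transitive, every prehistoric chain of d' is one of d. *)
Lemma cf_provable_transfer s1 s2 Gamma Delta :
  cf_provable s1 Gamma Delta -> cf_provable s2 Gamma Delta.
Proof.
  intros [G [D [d [HG [HD Hcf]]]]].
  set (P := clos_trans nat (prehist d)).
  assert (P_trans : forall a b c, P a b -> P b c -> P a c) by (intros; eapply t_trans; eauto).
  destruct (rprovable_of_deriv P P_trans s1 G D d (t_step _ _)) as [n Hrp].
  destruct (deriv_of_rproof P s2 n G D Hrp G D) as [d' Hd']; [apply incl_refl .. |].
  exists G, D, d'. repeat split; auto.
  intros i Hcycle. exact (Hcf i (clos_trans_least _ _ P_trans Hd' i i Hcycle)).
Qed.

Theorem mainTheorem6 :
  forall Gamma Delta : list form,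
    (cf_provable G3s_BoxCut Gamma Delta <-> cf_provable G3s_Cut Gamma Delta) /\
    (cf_provable G3s_Cut Gamma Delta <-> cf_provable G3s Gamma Delta).
Proof.
  intros Gamma Delta. split; split; apply cf_provable_transfer.
Qed.
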